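(* Let $\mathcal R$ be a reaction network and $\mathcal U\subseteq\mathcal S$ a set of non-interacting species. Let $r_0=(y_0,y_0')\in\mathcal R_{\mathcal U}'$, $m\ge1$, $r_{1i}=(y_i,y_i')\in\mathcal R_{\mathcal U}$ for $i=1,\dots,m$, and $r_1=\oplus_{i=1}^m r_{1i}$, and suppose $r_0\oplus r_1\notin\overline{\mathcal R}_{\mathcal U}$. Then: (i) $r_0\in\mathcal R_{\mathcal U}'\setminus\mathcal R_{\mathcal U}$ and $r_{1i}\in\mathcal R_{\mathcal U}\cap\mathcal R_{\mathcal U}'$ for $i=1,\dots,m-1$; (ii) $\mathrm{supp}(y_i)\cap\mathcal U=\mathrm{supp}(y_{i-1}')\cap\mathcal U\neq\emptyset$ for $i=1,\dots,m$; (iii) if $r_0\oplus r_1\in\overline{\mathcal R}_0$, then $r_{1m}\in\mathcal R_{\mathcal U}\setminus\mathcal R_{\mathcal U}'$. Conversely, let $r_0\in\mathcal R_{\mathcal U}'$, $r_{1i}\in\mathcal R_{\mathcal U}$ ($i=1,\dots,m$), $r_1=\oplus_{i=1}^m r_{1i}$, and suppose (i) and (ii) hold. Then $r_0\oplus r_1\notin\overline{\mathcal R}_{\mathcal U}$; and if furthermore $r_{1m}\in\mathcal R_{\mathcal U}\setminus\mathcal R_{\mathcal U}'$, then $r_0\oplus r_1\in\overline{\mathcal R}_0$.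
   Context: Species $S_1,\dots,S_n$ are the unit vectors of $\mathbb{N}_0^n$ and $\mathcal S=\{S_1,\dots,S_n\}$; for $x\in\mathbb{N}_0^n$, $\mathrm{supp}(x)=\{S_k: x^k>0\}$. A reaction network (RN) is a (possibly infinite) subset $\mathcal R\subseteq\mathbb{N}_0^n\times\mathbb{N}_0^n$ containing no $(y,y')$ with $y=y'$; elements $(y,y')$ are reactions $y\to y'$ with reactant $y$ and product $y'$. For $r_1=(y_1,y_1'),\ r_2=(y_2,y_2')$ define $r_1\oplus r_2=(y_1+0\vee(y_2-y_1'),\ y_2'+0\vee(y_1'-y_2))$ ($\vee$ componentwise maximum); it is associative. $\mathrm{cl}(A)$ is the set of all finite $\oplus$-sums of elements of $A$, including $(0,0)$. For $\mathcal U\subseteq\mathcal S$ and a set $B\subseteq\mathbb{N}_0^n\times\mathbb{N}_0^n$ write $B_{\mathcal U}=\{(y,y')\in B:\mathrm{supp}(y)\cap\mathcal U\neq\emptyset\}$ and $B_{\mathcal U}'=\{(y,y')\in B:\mathrm{supp}(y')\cap\mathcal U\neq\emptyset\}$. Set $\overline{\mathcal R}=\mathrm{cl}(\mathcal R)$ and $\overline{\mathcal R}_0=\overline{\mathcal R}\setminus(\overline{\mathcal R}_{\mathcal U}\cup\overline{\mathcal R}_{\mathcal U}')$. $\mathcal U$ consists of non-interacting species (in $\mathcal R$) if for every reaction $y\to y'\in\mathcal R$, $\sum_{S_i\in\mathcal U}y^i\le1$ and $\sum_{S_i\in\mathcal U}(y')^i\le1$. *)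

From mathcomp Require Import all_boot.
Set Implicit Arguments. Unset Strict Implicit. Unset Printing Implicit Defensive.

Definition vec (n : nat) := {ffun 'I_n -> nat}.
(* a reaction (y, y') : reactant, product *)
Definition reac (n : nat) := (vec n * vec n)%type.

Definition vzero n : vec n := [ffun _ => 0].

Definition supp n (x : vec n) : {set 'I_n} := [set k | 0 < x k].

(* r1 (+) r2 = (y1 + 0 v (y2 - y1'), y2' + 0 v (y1' - y2));
   truncated nat subtraction is exactly 0 v (a - b). *)
Definition oplus n (r1 r2 : reac n) : reac n :=
  ([ffun k => r1.1 k + (r2.1 k - r1.2 k)],
   [ffun k => r2.2 k + (r1.2 k - r2.1 k)]).

Definition bigoplus n (s : seq (reac n)) : reac n :=
  foldl (@oplus n) (vzero n, vzero n) s.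

Definition cl n (A : reac n -> Prop) (r : reac n) : Prop :=
  exists s : seq (reac n), (forall x, x \in s -> A x) /\ r = bigoplus s.

Definition inU n (U : {set 'I_n}) (B : reac n -> Prop) (r : reac n) : Prop :=
  B r /\ supp r.1 :&: U != set0.
Definition inU' n (U : {set 'I_n}) (B : reac n -> Prop) (r : reac n) : Prop :=
  B r /\ supp r.2 :&: U != set0.

Definition cl0 n (U : {set 'I_n}) (R : reac n -> Prop) (r : reac n) : Prop :=
  cl R r /\ ~ inU U (cl R) r /\ ~ inU' U (cl R) r.

Definition is_RN n (R : reac n -> Prop) : Prop := forall r, R r -> r.1 <> r.2.

Definition non_interacting n (R : reac n -> Prop) (U : {set 'I_n}) : Prop :=
  forall r, R r -> (\sum_(i in U) r.1 i <= 1) /\ (\sum_(i in U) r.2 i <= 1).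

From mathcomp Require Import all_boot.
From mathcomp Require Import zify.
Set Implicit Arguments. Unset Strict Implicit.

(* The sum is built up by the partial chains c_j = r_0 (+) r_11 (+) ... (+) r_1j,
   with c_(j+1) = c_j (+) r_1(j+1).  Since (+) only ever adds to reactants,
   c_m has no U-species in its reactant iff no step adds one, i.e. iff at each
   step the U-part of the reactant y_(j+1) is covered by the U-part of the
   product of c_j.  Non-interaction makes every U-part a single species with
   multiplicity one, so "covered" means "equal": the U-part of y_(j+1) equals
   that of y_j', and then the U-part of the product of c_(j+1) is that of
   y_(j+1)'. *)

Section Oplus.
Variable n : nat.

Lemma oplus1E (a b : reac n) k : (oplus a b).1 k = a.1 k + (b.1 k - a.2 k).
Proof. by rewrite ffunE. Qed.

Lemma oplus2E (a b : reac n) k : (oplus a b).2 k = b.2 k + (a.2 k - b.1 k).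
Proof. by rewrite ffunE. Qed.

Lemma oplusA (a b c : reac n) : oplus (oplus a b) c = oplus a (oplus b c).
Proof. by congr pair; apply/ffunP => k; rewrite !ffunE /=; lia. Qed.

Lemma oplus0r (a : reac n) : oplus (vzero n, vzero n) a = a.
Proof. by case: a => a1 a2; congr pair; apply/ffunP => k; rewrite !ffunE /=; lia. Qed.

Lemma oplusr0 (a : reac n) : oplus a (vzero n, vzero n) = a.
Proof. by case: a => a1 a2; congr pair; apply/ffunP => k; rewrite !ffunE /=; lia. Qed.

Lemma oplus_reactant_ge (a b : reac n) k : a.1 k <= (oplus a b).1 k.
Proof. by rewrite oplus1E leq_addr. Qed.

Lemma bigoplus_rcons (s : seq (reac n)) (a : reac n) :
  bigoplus (rcons s a) = oplus (bigoplus s) a.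
Proof. exact: foldl_rcons. Qed.

Lemma bigoplus_cons (a : reac n) (s : seq (reac n)) :
  bigoplus (a :: s) = oplus a (bigoplus s).
Proof.
rewrite /bigoplus /= oplus0r.
elim/last_ind: s => [|s b IH]; first by rewrite oplusr0.
by rewrite !foldl_rcons IH oplusA.
Qed.

Lemma bigoplus_cl (A : reac n -> Prop) (s : seq (reac n)) :
  (forall x, x \in s -> A x) -> cl A (bigoplus s).
Proof. by move=> sA; exists s. Qed.

End Oplus.

Section UnitSpecies.
Variables (n : nat) (U : {set 'I_n}).

Lemma suppUP (x : vec n) :
  reflect (exists2 u, u \in U & 0 < x u) (supp x :&: U != set0).
Proof.
apply: (iffP (set0Pn _)) => [[u]|[u uU xu]]; last by exists u; rewrite !inE xu uU.
by rewrite !inE => /andP[xu uU]; exists u.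
Qed.

Lemma suppU0P (x : vec n) :
  reflect {in U, forall k, x k = 0} (supp x :&: U == set0).
Proof.
apply: (iffP eqP) => [x0 k kU|x0].
  apply/eqP; rewrite eqn0Ngt; apply/negP => xk.
  by have := in_set0 k; rewrite -x0 !inE xk kU.
by apply/setP => k; rewrite !inE; case kU: (k \in U); rewrite ?andbF ?x0.
Qed.

Lemma not_suppU_vanish (P : Prop) (x : vec n) :
  P -> ~ (P /\ supp x :&: U != set0) <-> {in U, forall k, x k = 0}.
Proof.
move=> p; split=> [nx | /suppU0P x0 [_]]; last by rewrite x0.
by apply/suppU0P; apply: contraT => ne; exfalso; exact: nx.
Qed.

Lemma notinU_vanish (B : reac n -> Prop) (r : reac n) :
  B r -> ~ inU U B r <-> {in U, forall k, r.1 k = 0}.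
Proof. exact: not_suppU_vanish. Qed.

Lemma notinU'_vanish (B : reac n -> Prop) (r : reac n) :
  B r -> ~ inU' U B r <-> {in U, forall k, r.2 k = 0}.
Proof. exact: not_suppU_vanish. Qed.

Lemma suppU_agree (x y : vec n) : {in U, x =1 y} -> supp x :&: U = supp y :&: U.
Proof.
by move=> xy; apply/setP => k; rewrite !inE; case kU: (k \in U); rewrite ?andbF ?xy.
Qed.

Lemma single_species (x : vec n) u :
  \sum_(i in U) x i <= 1 -> u \in U -> 0 < x u ->
  x u = 1 /\ {in U, forall k, k != u -> x k = 0}.
Proof.
move=> x1 uU xu; move: x1; rewrite (bigD1 u) //= => xU; split; first lia.
by move=> k kU ku; move: xU; rewrite (bigD1 k) /= ?kU ?ku //; lia.
Qed.

Section TwoComplexes.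
Variables x y : vec n.
Hypotheses (x1 : \sum_(i in U) x i <= 1) (y1 : \sum_(i in U) y i <= 1).

Lemma share_species_agree u : u \in U -> 0 < x u -> 0 < y u -> {in U, x =1 y}.
Proof.
move=> uU xu yu k kU.
have [x1u x0] := single_species x1 uU xu; have [y1u y0] := single_species y1 uU yu.
by case: (eqVneq k u) => [->|ku]; rewrite ?x1u ?y1u // x0 ?y0.
Qed.

Lemma suppU_eq_agree :
  supp x :&: U = supp y :&: U -> supp x :&: U != set0 -> {in U, x =1 y}.
Proof.
move=> xy /suppUP[u uU xu]; apply: (share_species_agree uU xu).
have : u \in supp x :&: U by rewrite !inE xu uU.
by rewrite xy !inE => /andP[].
Qed.

Lemma dominated_agree :
  {in U, forall k, x k <= y k} -> supp x :&: U != set0 -> {in U, x =1 y}.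
Proof.
move=> xy /suppUP[u uU xu]; apply: (share_species_agree uU xu).
exact: leq_trans xu (xy u uU).
Qed.

End TwoComplexes.
End UnitSpecies.

Section Steps.
Variables (n : nat) (U : {set 'I_n}).

Lemma linked_step (a b : reac n) :
  {in U, forall k, a.1 k = 0} -> {in U, b.1 =1 a.2} ->
  {in U, forall k, (oplus a b).1 k = 0} /\ {in U, (oplus a b).2 =1 b.2}.
Proof.
move=> a0 ba; split=> k kU; [rewrite oplus1E a0 // | rewrite oplus2E]; rewrite ba //; lia.
Qed.

Lemma absorbed_step (a b : reac n) (y : vec n) :
  \sum_(i in U) b.1 i <= 1 -> \sum_(i in U) y i <= 1 ->
  {in U, a.2 =1 y} -> {in U, forall k, (oplus a b).1 k = 0} ->
  supp b.1 :&: U != set0 ->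
  {in U, b.1 =1 y} /\ {in U, (oplus a b).2 =1 b.2}.
Proof.
move=> b1 y1 ay ab0 bU.
have by_ : {in U, b.1 =1 y}.
  apply: dominated_agree b1 y1 _ bU => k kU.
  by move: (ab0 k kU); rewrite oplus1E -(ay k kU); lia.
by split=> // k kU; rewrite oplus2E ay // by_ //; lia.
Qed.

End Steps.

Section Chain.
Variables (n : nat) (R : reac n -> Prop) (U : {set 'I_n}).
Hypothesis noninter : non_interacting R U.
Variables (m : nat) (r : nat -> reac n).
Hypothesis R_r : forall j, j <= m -> R (r j).

Definition chain (j : nat) : reac n := bigoplus [seq r i | i <- iota 0 j.+1].

Lemma chain0 : chain 0 = r 0.
Proof. exact: oplus0r. Qed.

Lemma chainS j : chain j.+1 = oplus (chain j) (r j.+1).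
Proof. by rewrite /chain -addn1 iotaD map_cat cats1 bigoplus_rcons. Qed.

Lemma chain_full : oplus (r 0) (bigoplus [seq r i | i <- iota 1 m]) = chain m.
Proof. by rewrite /chain bigoplus_cons. Qed.

Lemma chain_cl : cl R (chain m).
Proof. by apply: bigoplus_cl => x /mapP[i]; rewrite mem_iota => im ->; apply: R_r; lia. Qed.

Lemma chain_reactant_mono i j k : i <= j -> (chain i).1 k <= (chain j).1 k.
Proof.
elim: j => [|j IH]; first by rewrite leqn0 => /eqP ->.
rewrite leq_eqVlt => /orP[/eqP -> //|ij].
by rewrite chainS; apply: leq_trans (IH ij) (oplus_reactant_ge _ _ _).
Qed.

Let sum_reactant j : j <= m -> \sum_(i in U) (r j).1 i <= 1.
Proof. by move/R_r/noninter => []. Qed.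
Let sum_product j : j <= m -> \sum_(i in U) (r j).2 i <= 1.
Proof. by move/R_r/noninter => []. Qed.

Lemma chain_links_of_absorbed :
  {in U, forall k, (chain m).1 k = 0} ->
  (forall j, 1 <= j <= m -> supp (r j).1 :&: U != set0) ->
  forall j, j <= m ->
    {in U, (chain j).2 =1 (r j).2} /\ (0 < j -> {in U, (r j).1 =1 (r j.-1).2}).
Proof.
move=> cm0 rU; elim=> [|j IH] jm; first by rewrite chain0.
have [cj _] := IH (ltnW jm).
have cS0 : {in U, forall k, (chain j.+1).1 k = 0}.
  by move=> k kU; apply/eqP; rewrite -leqn0 -(cm0 k kU) chain_reactant_mono.
rewrite chainS in cS0 *.
have rU' := rU _ (jm : 0 < j.+1 <= m).
by case: (absorbed_step (sum_reactant jm) (sum_product (ltnW jm)) cj cS0 rU').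
Qed.

Lemma chain_absorbed_of_links :
  {in U, forall k, (r 0).1 k = 0} ->
  (forall j, 1 <= j <= m -> {in U, (r j).1 =1 (r j.-1).2}) ->
  forall j, j <= m ->
    {in U, forall k, (chain j).1 k = 0} /\ {in U, (chain j).2 =1 (r j).2}.
Proof.
move=> r00 links; elim=> [|j IH] jm; first by rewrite chain0.
have [cj0 cj] := IH (ltnW jm).
have link : {in U, (r j.+1).1 =1 (chain j).2}.
  by move=> k kU; rewrite cj // (links _ (jm : 0 < j.+1 <= m)).
by rewrite chainS; apply: linked_step.
Qed.

End Chain.

Theorem lemma4p9 (n : nat) (R : reac n -> Prop) (U : {set 'I_n}) :
  is_RN R -> non_interacting R U ->
  forall (m : nat) (r : nat -> reac n),
    1 <= m ->
    inU' U R (r 0) ->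
    (forall i, 1 <= i <= m -> inU U R (r i)) ->
    let r1 := bigoplus [seq r i | i <- iota 1 m] in
    let cond_i := (inU' U R (r 0) /\ ~ inU U R (r 0)) /\
                  (forall i, 1 <= i <= m - 1 -> inU U R (r i) /\ inU' U R (r i)) in
    let cond_ii := forall i, 1 <= i <= m ->
                    supp (r i).1 :&: U = supp (r i.-1).2 :&: U /\
                    supp (r i).1 :&: U != set0 in
    (~ inU U (cl R) (oplus (r 0) r1) ->
       cond_i /\ cond_ii /\
       (cl0 U R (oplus (r 0) r1) -> inU U R (r m) /\ ~ inU' U R (r m)))
    /\
    (cond_i -> cond_ii ->
       ~ inU U (cl R) (oplus (r 0) r1) /\
       (inU U R (r m) /\ ~ inU' U R (r m) -> cl0 U R (oplus (r 0) r1))).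
Proof.
move=> _ noninter m r m1 r0U' rU r1 cond_i cond_ii.
have R_r j : j <= m -> R (r j).
  by case: j => [|j] jm; [case: r0U' | case: (rU j.+1 jm)].
have sums j : j <= m -> (\sum_(i in U) (r j).1 i <= 1) /\ (\sum_(i in U) (r j).2 i <= 1).
  by move/R_r/noninter.
have clc := chain_cl R_r.
rewrite /r1 chain_full; split.
- (* (i)-(iii): the U-reactant of the sum is empty, so every link is exact. *)
  move/(notinU_vanish U clc) => cm0.
  have rU1 j : 0 < j <= m -> supp (r j).1 :&: U != set0 by move/rU => [].
  have links j (jm : j <= m) := chain_links_of_absorbed noninter R_r cm0 rU1 jm.
  have cii : cond_ii.
    move=> i /andP[i1 im]; split; last by apply: rU1; rewrite i1.
    exact/suppU_agree/((links i im).2 i1).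
  split; [split; [split=> //| ] | split=> //].
  + apply/(notinU_vanish U (R_r 0 (leq0n m))) => k kU.
    have := chain_reactant_mono r k (leq0n m).
    by rewrite chain0 cm0 // leqn0 => /eqP.
  + move=> i im; split; first by apply: rU; lia.
    split; first by apply: R_r; lia.
    by have [<- ->] := cii i.+1 ltac:(lia).
  + move=> [_ [_ /(notinU'_vanish U clc) cm2]]; split; first by apply: rU; rewrite m1 leqnn.
    apply/(notinU'_vanish U (R_r m (leqnn m))) => k kU.
    by rewrite -((links m (leqnn m)).1 k kU) cm2.
-
  move=> [[_ /(notinU_vanish U (R_r 0 (leq0n m))) r00] _] cii.
  have links j : 0 < j <= m -> {in U, (r j).1 =1 (r j.-1).2}.
    move=> jm; have [eq ne] := cii j jm.
    have [jm' jm''] : j <= m /\ j.-1 <= m by lia.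
    exact: suppU_eq_agree (sums j jm').1 (sums _ jm'').2 eq ne.
  have [cm0 cm2] := chain_absorbed_of_links r00 links (leqnn m).
  split; first exact/(notinU_vanish U clc).
  move=> [_ /(notinU'_vanish U (R_r m (leqnn m))) rm2]; split=> //; split.
  + exact/(notinU_vanish U clc).
  + by apply/(notinU'_vanish U clc) => k kU; rewrite cm2 // rm2.
Qed.
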